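(* Let $N$ be a finite set with $|N|\ge2$, and assume that $\langle o,\eta\rangle\le u$, with $o\in\mathbb{R}^{\Upsilon}$ and $u\in\mathbb{R}$, is valid for all $\eta\in P_N$. Then $u\ge 0$. Moreover: (i) $u=0$ if and only if the face of $P_N$ defined by this inequality contains $\eta_{G_\emptyset}$ (the zero vector), where $G_\emptyset$ is the empty graph over $N$; (ii) if $u=0$ then $o(a|B)\le 0$ for every $(a|B)\in\Upsilon$; (iii) the facet-defining inequalities for $P_N$ that are tight at the empty graph are exactly (up to positive scaling) the inequalities $-\eta(a|B)\le 0$, $(a|B)\in\Upsilon$; (iv) if the inequality is facet-defining for $P_N$ and $u>0$, then $o(a|B)\ge o(a|A)\ge 0$ whenever $a\in N$ and $\emptyset\neq A\subseteq B\subseteq N\setminus\{a\}$.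
   Context: $\mathrm{DAG}(N)$ is the set of acyclic directed graphs over $N$; $\mathrm{pa}_G(a)$ is the parent set of $a$ in $G$; the empty graph has no arrows. $\Upsilon=\{(a|B): a\in N,\ \emptyset\neq B\subseteq N\setminus\{a\}\}$; $\eta_G\in\mathbb{R}^{\Upsilon}$ has $\eta_G(a|B)=1$ if $B=\mathrm{pa}_G(a)$, else $0$; $P_N=\mathrm{conv}\{\eta_G:G\in\mathrm{DAG}(N)\}$ is the family-variable polytope, of dimension $|\Upsilon|$. *)

From HB Require Import structures.
From mathcomp Require Import all_boot all_order all_algebra.
Set Implicit Arguments. Unset Strict Implicit. Unset Printing Implicit Defensive.
Import Order.TTheory GRing.Theory Num.Theory.
Local Open Scope ring_scope.

Definition Ups_pred (N : finType) : pred (N * {set N}) :=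
  fun p => (p.2 != set0) && (p.1 \notin p.2).
Definition Ups (N : finType) := {p : N * {set N} | Ups_pred p}.

(* A directed graph over N is given by its parent sets pa a. The arc
   x -> y is present iff x \in pa y. *)
Definition arc (N : finType) (pa : {ffun N -> {set N}}) : rel N :=
  fun x y => x \in pa y.
Definition is_dag (N : finType) (pa : {ffun N -> {set N}}) : bool :=
  [forall x, forall y, arc pa x y ==> ~~ connect (arc pa) y x].
Definition dag (N : finType) := {pa : {ffun N -> {set N}} | is_dag pa}.

Definition empty_pa (N : finType) : {ffun N -> {set N}} := [ffun _ => set0].

Definition eta_of (R : realFieldType) (N : finType) (pa : {ffun N -> {set N}})
  : {ffun Ups N -> R} := [ffun x => ((val x).2 == pa (val x).1)%:R].

Definition inner (R : realFieldType) (N : finType) (o e : {ffun Ups N -> R}) : R :=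
  \sum_x o x * e x.

Definition in_PN (R : realFieldType) (N : finType) (e : {ffun Ups N -> R}) : Prop :=
  exists lam : {ffun dag N -> R},
    [/\ forall G, 0 <= lam G, \sum_G lam G = 1 &
        forall x, e x = \sum_G lam G * eta_of R (val G) x].

Definition valid (R : realFieldType) (N : finType) (o : {ffun Ups N -> R}) (u : R) :=
  forall e, in_PN e -> inner o e <= u.

Definition in_face (R : realFieldType) (N : finType) (o : {ffun Ups N -> R}) (u : R)
  (e : {ffun Ups N -> R}) : Prop := in_PN e /\ inner o e = u.

Definition aff_indep (R : realFieldType) (N : finType) (k : nat)
  (p : 'I_k -> {ffun Ups N -> R}) : Prop :=
  forall lam : 'I_k -> R, \sum_i lam i = 0 -> (forall x, \sum_i lam i * p i x = 0) ->
    forall i, lam i = 0.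

(* facet-defining: valid, and the face has affine dimension |Upsilon| - 1
   (= dim P_N - 1): it contains |Upsilon| affinely independent points but
   not |Upsilon|+1 of them. *)
Definition facet (R : realFieldType) (N : finType) (o : {ffun Ups N -> R}) (u : R) :=
  [/\ valid o u,
      (exists p : 'I_#|{: Ups N}| -> {ffun Ups N -> R},
          aff_indep p /\ forall i, in_face o u (p i)) &
      ~ (exists p : 'I_(#|{: Ups N}|).+1 -> {ffun Ups N -> R},
          aff_indep p /\ forall i, in_face o u (p i))].

(* o(a|B), meaningful when (a|B) \in Upsilon (0 otherwise) *)
Definition ocoord (R : realFieldType) (N : finType) (o : {ffun Ups N -> R})
  (a : N) (B : {set N}) : R :=
  if insub (a, B) is Some x then o x else 0.

Definition unitvec (R : realFieldType) (N : finType) (x : Ups N) : {ffun Ups N -> R} :=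
  [ffun y => (y == x)%:R].

From Pilot Require Import Defs.
From HB Require Import structures.
From mathcomp Require Import all_boot all_order all_algebra ring lra zify.
Import Order.TTheory GRing.Theory Num.Theory.
Local Open Scope ring_scope.
Set Implicit Arguments. Unset Strict Implicit.

(* The empty graph and the one-family graphs [a <- B] are DAGs, so [0] and
   every unit vector lie in P_N; together they form an |Upsilon|-simplex.
   Validity at these points gives u >= 0 and o(a|B) <= u.  If u = 0, then
   o <= 0 and, as eta >= 0 on P_N, the face lies in the coordinate subspace
   of the zeros of o, so it is a facet only if o has exactly one nonzero
   coordinate.  For a facet with u > 0 some vertex G on it has pa_G(a) = B
   (otherwise the face would lie both in eta(a|B) = 0 and in a hyperplane
   missing the origin); shrinking that parent set to A keeps G acyclic,
   whence o(a|A) <= o(a|B) by validity. *)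

Lemma free_on_leq_card (R : realFieldType) (T : finType) (P : {set T}) (k : nat)
  (f : 'I_k -> T -> R) :
  (forall lam : 'I_k -> R, (forall t, t \in P -> \sum_i lam i * f i t = 0) ->
     forall i, lam i = 0) -> (k <= #|P|)%N.
Proof.
move=> free; rewrite leqNgt; apply/negP => hlt.
pose M : 'M[R]_(k, #|P|) := \matrix_(i, j) f i (enum_val j).
have : kermx M != 0.
  by rewrite -mxrank_eq0 mxrank_ker -lt0n subn_gt0 (leq_ltn_trans (rank_leq_col M)).
apply/negP; rewrite negbK; apply/eqP/row_matrixP => i; rewrite row0.
have kerM : row i (kermx M) *m M = 0 by apply/eqP; rewrite -sub_kermx row_sub.
apply/rowP => j; rewrite [RHS]mxE; move: j; apply: free => t tP.
have := congr1 (fun v : 'rV[R]_#|P| => v 0 (enum_rank_in tP t)) kerM.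
rewrite !mxE => e; apply: etrans e; apply: eq_bigr => i' _.
by rewrite [M _ _]mxE enum_rankK_in.
Qed.

Section AffineDimension.
Variables (R : realFieldType) (N : finType).
Implicit Types (o e : {ffun Ups N -> R}) (Z : {set Ups N}).

Lemma sum_inner o k (lam : 'I_k -> R) (p : 'I_k -> {ffun Ups N -> R}) :
  \sum_i lam i * inner o (p i) = \sum_x o x * \sum_i lam i * p i x.
Proof.
rewrite /inner; under eq_bigr => i _ do rewrite mulr_sumr.
rewrite exchange_big /=; apply: eq_bigr => x _.
by rewrite mulr_sumr; apply: eq_bigr => i _; ring.
Qed.

(* Homogenize: an affinely independent family vanishing on [Z] becomes a
   linearly independent one on [~: Z] plus one extra constant coordinate. *)
Lemma aff_indep_zeros_card k (p : 'I_k -> {ffun Ups N -> R}) Z :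
  aff_indep p -> (forall i z, z \in Z -> p i z = 0) ->
  (k + #|Z| <= #|{: Ups N}|.+1)%N.
Proof.
move=> indep pZ; rewrite -(cardsC Z) addnC -addnS leq_add2l.
have -> : #|~: Z|.+1 = #|None |: [set Some z | z in ~: Z]|.
  rewrite cardsU1 card_imset; last exact: Some_inj.
  by case: imsetP => // -[].
apply: (@free_on_leq_card R _ _ k (fun i t => if t is Some z then p i z else 1)).
move=> lam hlam; apply: indep.
  by rewrite -[RHS](hlam None) ?setU11 //; apply: eq_bigr => i _; rewrite mulr1.
move=> x; have [xZ | xZ] := boolP (x \in Z).
  by apply: big1 => i _; rewrite pZ ?mulr0.
by apply: (hlam (Some x)); rewrite setU1r // imset_f // inE.
Qed.

(* On a hyperplane missing the origin affine independence is linear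
   independence, so the extra coordinate is not needed. *)
Lemma aff_indep_hyperplane_zeros_card k (p : 'I_k -> {ffun Ups N -> R}) Z o u :
  u != 0 -> aff_indep p -> (forall i, inner o (p i) = u) ->
  (forall i z, z \in Z -> p i z = 0) -> (k + #|Z| <= #|{: Ups N}|)%N.
Proof.
move=> u_neq0 indep on_hyp pZ; rewrite -(cardsC Z) addnC leq_add2l.
apply: (@free_on_leq_card R _ _ k (fun i z => p i z)) => lam hlam.
have comb0 x : \sum_i lam i * p i x = 0.
  have [xZ | xZ] := boolP (x \in Z); last by apply: hlam; rewrite inE.
  by apply: big1 => i _; rewrite pZ ?mulr0.
apply: (indep _ _ comb0); apply/eqP.
have : u * \sum_i lam i = \sum_x o x * \sum_i lam i * p i x.
  by rewrite -sum_inner mulr_sumr; apply: eq_bigr => i _; rewrite on_hyp mulrC.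
rewrite [RHS]big1 => [/eqP|x _]; last by rewrite comb0 mulr0.
by rewrite mulf_eq0 (negbTE u_neq0).
Qed.

Definition unit_or0 (y : option (Ups N)) : {ffun Ups N -> R} :=
  if y is Some x then unitvec R x else 0.

Lemma aff_indep_unit_or0 k (f : 'I_k -> option (Ups N)) :
  injective f -> aff_indep (fun i => unit_or0 (f i)).
Proof.
move=> f_inj lam sum0 comb0.
have lam_some i x : f i = Some x -> lam i = 0.
  move=> fi; rewrite -(comb0 x) (bigD1 i) //= fi ffunE eqxx mulr1 big1 ?addr0 //.
  move=> j ji; case fj: (f j) => [y|] /=; last by rewrite ffunE mulr0.
  rewrite ffunE; case: eqP => [xy|]; last by rewrite mulr0.
  by move: ji; rewrite (f_inj j i) ?eqxx // fj fi xy.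
move=> i; case fi: (f i) => [x|]; first exact: lam_some fi.
move: sum0; rewrite (bigD1 i) //= big1 ?addr0 // => j ji.
case fj: (f j) => [y|]; first exact: lam_some fj.
by move: ji; rewrite (f_inj j i) ?eqxx // fj fi.
Qed.

End AffineDimension.

Section Graphs.
Variables (R : realFieldType) (N : finType).
Implicit Types (o e : {ffun Ups N -> R}) (pa : {ffun N -> {set N}}).

Lemma subgraph_is_dag pa pa' :
  is_dag pa -> (forall b, pa' b \subset pa b) -> is_dag pa'.
Proof.
move=> /forallP acyc sub.
have sub_arc x y : Defs.arc pa' x y -> Defs.arc pa x y by apply/subsetP/sub.
apply/forallP => x; apply/forallP => y.
apply/implyP => /sub_arc xy; move/forallP/(_ y)/implyP/(_ xy): (acyc x).
by apply: contra; apply: connect_sub => z w /sub_arc/connect1.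
Qed.

Definition single_pa (a : N) (B : {set N}) : {ffun N -> {set N}} :=
  [ffun b => if b == a then B else set0].

Lemma single_is_dag a (B : {set N}) : a \notin B -> is_dag (single_pa a B).
Proof.
move=> aB; apply/forallP => x; apply/forallP => y; apply/implyP.
rewrite /Defs.arc ffunE; case: eqP => [->{y} xB|]; last by rewrite inE.
apply/negP => /connectP[[|z q] /= hq hl]; first by move: xB; rewrite hl (negbTE aB).
by move: hq; rewrite /Defs.arc ffunE; case: eqP => _; rewrite ?(negbTE aB) ?inE.
Qed.

Lemma empty_is_dag : is_dag (empty_pa N).
Proof.
apply/forallP => x; apply/forallP => y; apply/implyP.
by rewrite /Defs.arc ffunE inE.
Qed.

Lemma eta_empty : eta_of R (empty_pa N) = 0.
Proof.
apply/ffunP => x; rewrite !ffunE.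
by case: x => -[a B] /= /andP[/negbTE ->].
Qed.

Lemma eta_single (x : Ups N) :
  eta_of R (single_pa (val x).1 (val x).2) = unitvec R x.
Proof.
apply/ffunP => y; rewrite !ffunE; congr ((nat_of_bool _)%:R).
apply/eqP/eqP => [|-> ]; last by rewrite eqxx.
case: ifP => [/eqP y1 y2 | _ y2].
  by apply: val_inj; rewrite [val y]surjective_pairing y1 y2 -surjective_pairing.
by move: (valP y); rewrite /Ups_pred y2 eqxx.
Qed.

Lemma in_PN_eta pa : is_dag pa -> in_PN (eta_of R pa).
Proof.
move=> pa_dag; pose G : dag N := exist _ pa pa_dag.
exists [ffun G' => (G' == G)%:R]; split.
- by move=> G'; rewrite ffunE ler0n.
- by rewrite (bigD1 G) //= ffunE eqxx big1 ?addr0 // => G' /negbTE h; rewrite ffunE h.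
- move=> x; rewrite (bigD1 G) //= !ffunE eqxx mul1r big1 ?addr0 //.
  by move=> G' /negbTE h; rewrite !ffunE h mul0r.
Qed.

Lemma in_PN0 : in_PN (0 : {ffun Ups N -> R}).
Proof. by rewrite -eta_empty; apply: in_PN_eta empty_is_dag. Qed.

Lemma in_PN_unitvec (x : Ups N) : in_PN (unitvec R x).
Proof.
rewrite -eta_single; apply/in_PN_eta/single_is_dag.
by case/andP: (valP x).
Qed.

Lemma in_PN_unit_or0 (y : option (Ups N)) : in_PN (unit_or0 R y).
Proof. by case: y => [x|]; [apply: in_PN_unitvec | apply: in_PN0]. Qed.

Lemma in_PN_ge0 e x : in_PN e -> 0 <= e x.
Proof.
case=> lam [lam_ge0 _ ->]; apply: sumr_ge0 => G _.
by rewrite mulr_ge0 // ffunE ler0n.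
Qed.

End Graphs.

Section InnerProduct.
Variables (R : realFieldType) (N : finType).
Implicit Types (o e : {ffun Ups N -> R}).

Lemma inner0 o : inner o 0 = 0.
Proof. by apply: big1 => x _; rewrite ffunE mulr0. Qed.

Lemma inner_unitvec o x : inner o (unitvec R x) = o x.
Proof.
rewrite /inner (bigD1 x) //= ffunE eqxx mulr1 big1 ?addr0 //.
by move=> y /negbTE yx; rewrite ffunE yx mulr0.
Qed.

Lemma inner_convex o e (lam : {ffun dag N -> R}) :
  (forall x, e x = \sum_G lam G * eta_of R (val G) x) ->
  inner o e = \sum_G lam G * inner o (eta_of R (val G)).
Proof.
move=> eE; rewrite /inner; under eq_bigr => x _ do rewrite eE mulr_sumr.
rewrite exchange_big /=; apply: eq_bigr => G _.
by rewrite mulr_sumr; apply: eq_bigr => x _; ring.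
Qed.

Lemma ocoordE o a A : ocoord o a A = \sum_y o y * (val y == (a, A))%:R.
Proof.
rewrite /ocoord; case: insubP => [x _ xE|aA_Ups].
  rewrite (bigD1 x) //= xE eqxx mulr1 big1 ?addr0 // => y yx.
  by rewrite -xE (inj_eq val_inj) (negbTE yx) mulr0.
apply/esym/big1 => y _; case: eqP => [yE|]; last by rewrite mulr0.
by move: aA_Ups; rewrite -yE (valP y).
Qed.

(* [ocoord] is [0] off Upsilon, which covers an empty new parent set [A]. *)
Lemma inner_eta_update o (pa : {ffun N -> {set N}}) a A :
  inner o (eta_of R [ffun b => if b == a then A else pa b]) =
  inner o (eta_of R pa) - ocoord o a (pa a) + ocoord o a A.
Proof.
rewrite !ocoordE /inner -sumrB -big_split /=; apply: eq_bigr => y _.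
rewrite !ffunE -[sval y]/(val y); case: (val y) => b C; rewrite !xpair_eqE /=.
by case: ifP => [/eqP -> | _] /=; ring.
Qed.

End InnerProduct.

Section Faces.
Variables (R : realFieldType) (N : finType).
Implicit Types (o e : {ffun Ups N -> R}).

Lemma valid_ge0 o u : valid o u -> 0 <= u.
Proof. by move/(_ _ (in_PN0 R N)); rewrite inner0. Qed.

Lemma valid_le o u x : valid o u -> o x <= u.
Proof. by move/(_ _ (in_PN_unitvec R x)); rewrite inner_unitvec. Qed.

Lemma in_face_empty o u : in_face o u (eta_of R (empty_pa N)) <-> u = 0.
Proof.
rewrite /in_face eta_empty inner0.
by split=> [[_ <-] | <-]; split; last by [] ; apply: in_PN0.
Qed.

(* A convex combination of vertices reaches the bound [u] only through the
   vertices on the face. *)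
Lemma face_coord0 o u e x : valid o u -> in_face o u e ->
  (forall G : dag N, inner o (eta_of R (val G)) = u -> eta_of R (val G) x = 0) ->
  e x = 0.
Proof.
move=> o_valid [[lam [lam_ge0 lam_sum1 eE]] on_face] vertex0.
have gap_ge0 (G : dag N) : 0 <= u - inner o (eta_of R (val G)).
  by rewrite subr_ge0; apply/o_valid/in_PN_eta; exact: valP.
have gap0 : \sum_G lam G * (u - inner o (eta_of R (val G))) = 0.
  under eq_bigr => G _ do rewrite mulrBr.
  by rewrite sumrB -mulr_suml lam_sum1 mul1r -(inner_convex o eE) on_face subrr.
rewrite eE; apply: big1 => G _.
have /eqP := psumr_eq0P (fun G _ => mulr_ge0 (lam_ge0 G) (gap_ge0 G)) gap0 (i := G) isT.
rewrite mulf_eq0 subr_eq0 => /orP[/eqP -> | /eqP/esym/vertex0 ->].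
  by rewrite mul0r.
by rewrite mulr0.
Qed.

Lemma facet_vertex_at o u x : facet o u -> u != 0 ->
  exists2 G : dag N, inner o (eta_of R (val G)) = u & eta_of R (val G) x != 0.
Proof.
move=> [o_valid [p [indep on_face]] _] u_neq0.
have [/existsP[G /andP[/eqP ? ?]] | no_vertex] :=
  boolP [exists G : dag N,
           (inner o (eta_of R (val G)) == u) && (eta_of R (val G) x != 0)].
  by exists G.
have p_x0 i z : z \in [set x] -> p i z = 0.
  move/set1P => ->; apply: face_coord0 o_valid (on_face i) _ => G on_G.
  by apply/eqP; move/existsPn/(_ G): no_vertex; rewrite on_G eqxx negbK.
have := aff_indep_hyperplane_zeros_card u_neq0 indep (fun i => (on_face i).2) p_x0.
by rewrite cards1 addn1 ltnn.
Qed.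

Lemma facet_ocoord_le o u a (A B : {set N}) : facet o u -> 0 < u ->
  B != set0 -> a \notin B -> A \subset B -> ocoord o a A <= ocoord o a B.
Proof.
move=> o_facet u_gt0 B_neq0 aB AB.
have aB_Ups : Ups_pred (a, B) by rewrite /Ups_pred /= B_neq0 aB.
have [[pa pa_dag] /= on_G] :=
  facet_vertex_at (exist _ (a, B) aB_Ups) o_facet (lt0r_neq0 u_gt0).
rewrite ffunE pnatr_eq0 eqb0 negbK /= => /eqP paB.
pose pa' : {ffun N -> {set N}} := [ffun b => if b == a then A else pa b].
have pa'_dag : is_dag pa'.
  apply: (subgraph_is_dag pa_dag) => b; rewrite ffunE.
  by case: eqP => [->|_]; rewrite -?paB.
have [o_valid _ _] := o_facet.
have := o_valid _ (in_PN_eta R pa'_dag).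
rewrite inner_eta_update on_G -paB; lra.
Qed.

Lemma ocoord_set0 o a : ocoord o a set0 = 0.
Proof. by rewrite /ocoord insubF // /Ups_pred /= eqxx. Qed.

Lemma face_at0_coord0 o e z : (forall x, o x <= 0) -> in_face o 0 e ->
  o z != 0 -> e z = 0.
Proof.
move=> o_le0 [e_PN on_face] oz_neq0.
have terms_ge0 x : true -> 0 <= - (o x * e x).
  by rewrite oppr_ge0 mulr_le0_ge0 // in_PN_ge0.
have terms0 : \sum_x - (o x * e x) = 0 by rewrite sumrN -/(inner o e) on_face oppr0.
have /eqP := psumr_eq0P terms_ge0 terms0 (i := z) isT.
by rewrite oppr_eq0 mulf_eq0 (negbTE oz_neq0) => /eqP.
Qed.

End Faces.

Section EmptyGraphFacets.
Variables (R : realFieldType) (N : finType).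
Implicit Types (o e : {ffun Ups N -> R}).

Definition all_vertices (i : 'I_#|{: Ups N}|.+1) : option (Ups N) :=
  enum_val (cast_ord (esym (card_option (Ups N))) i).

Lemma all_vertices_inj : injective all_vertices.
Proof. by move=> i j /enum_val_inj/cast_ord_inj. Qed.

Definition vertices_off (x : Ups N) (j : 'I_#|{: Ups N}|) : option (Ups N) :=
  if enum_val j == x then None else Some (enum_val j).

Lemma vertices_off_inj x : injective (vertices_off x).
Proof.
rewrite /vertices_off => i j; case: eqP => [ix|_]; case: eqP => [jx|_] //.
  by move=> _; apply: enum_val_inj; rewrite ix jx.
by case=> /enum_val_inj.
Qed.

Lemma facet_at_empty_unitvec o u :
  facet o u -> in_face o u (eta_of R (empty_pa N)) ->
  exists c : R, 0 < c /\ exists x : Ups N,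
    (forall y, o y = - (c * unitvec R x y)) /\ u = c * 0.
Proof.
move=> [o_valid [p [indep on_face]] no_simplex] /in_face_empty u0.
subst u; have o_le0 x : o x <= 0 by apply: valid_le o_valid.
have [/existsP[x o_x] | /existsPn o0] := boolP [exists x, o x != 0]; last first.
  case: no_simplex; exists (fun i => unit_or0 R (all_vertices i)); split.
    exact/aff_indep_unit_or0/all_vertices_inj.
  move=> i; split; first exact: in_PN_unit_or0.
  by apply: big1 => y _; move/negPn/eqP: (o0 y) => ->; rewrite mul0r.
have o_supp y : y != x -> o y = 0.
  move=> yx; apply/eqP; apply: contraT => o_y.
  have p_xy i z : z \in [set x; y] -> p i z = 0.
    by case/set2P => ->; apply: face_at0_coord0 o_le0 (on_face i) _.
  by have := aff_indep_zeros_card indep p_xy; rewrite cards2 eq_sym yx; lia.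
exists (- o x); split; first by rewrite oppr_gt0 lt_neqAle o_x o_le0.
exists x; split=> [y|]; last by rewrite mulr0.
rewrite ffunE mulNr opprK; have [->|yx] := eqVneq y x; first by rewrite mulr1.
by rewrite mulr0 o_supp.
Qed.

Lemma unitvec_facet_at_empty o (c : R) x :
  0 < c -> (forall y, o y = - (c * unitvec R x y)) ->
  facet o 0 /\ in_face o 0 (eta_of R (empty_pa N)).
Proof.
move=> c_gt0 oE.
have innerE e : inner o e = - (c * e x).
  rewrite /inner (bigD1 x) //= oE ffunE eqxx mulr1 mulNr big1 ?addr0 //.
  by move=> y /negbTE yx; rewrite oE ffunE yx mulr0 oppr0 mul0r.
have face_x0 e : in_face o 0 e -> e x = 0.
  case=> _ /eqP; rewrite innerE oppr_eq0 mulf_eq0 (gt_eqF c_gt0) /=.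
  by move/eqP.
split; last exact/in_face_empty.
split.
- move=> e e_PN; rewrite innerE oppr_le0.
  by apply: mulr_ge0; [apply: ltW | apply: in_PN_ge0].
- exists (fun j => unit_or0 R (vertices_off x j)); split.
    exact/aff_indep_unit_or0/vertices_off_inj.
  move=> j; split; first exact: in_PN_unit_or0.
  rewrite innerE /vertices_off; case: eqP => [_|jx]; first by rewrite ffunE mulr0 oppr0.
  by rewrite ffunE eq_sym (introF eqP jx) mulr0 oppr0.
- case=> p [indep on_face].
  have p_x i z : z \in [set x] -> p i z = 0 by move/set1P => ->; apply: face_x0.
  by have := aff_indep_zeros_card indep p_x; rewrite cards1 addn1 ltnn.
Qed.

End EmptyGraphFacets.

Unset Implicit Arguments.
Set Strict Implicit.

Theorem lemma2 (R : realFieldType) (N : finType) (hN : (2 <= #|N|)%N) :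
  (forall (o : {ffun Ups N -> R}) (u : R), valid o u ->
     [/\ 0 <= u,
         (u = 0 <-> in_face o u (eta_of R (empty_pa N))),
         (u = 0 -> forall x : Ups N, o x <= 0) &
         (facet o u -> 0 < u ->
            forall (a : N) (A B : {set N}), A != set0 -> A \subset B -> a \notin B ->
              ocoord o a A <= ocoord o a B /\ 0 <= ocoord o a A)])
  /\
  (forall (o : {ffun Ups N -> R}) (u : R),
     (facet o u /\ in_face o u (eta_of R (empty_pa N))) <->
     (exists c : R, 0 < c /\ exists x : Ups N, (forall y, o y = - (c * unitvec R x y)) /\ u = c * 0)).
Proof.
split=> [o u o_valid | o u].
  split; [exact: valid_ge0 o_valid | by rewrite in_face_empty | |].
    by move=> u0 x; rewrite -u0; apply: valid_le.
  move=> o_facet u_gt0 a A B A_neq0 AB aB.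
  have B_neq0 : B != set0 by apply: contraNneq A_neq0 => B0; rewrite -subset0 -B0.
  have aA : a \notin A by apply: contra aB; apply: (subsetP AB).
  split; first exact: facet_ocoord_le o_facet u_gt0 B_neq0 aB AB.
  rewrite -(ocoord_set0 o a).
  exact: facet_ocoord_le o_facet u_gt0 A_neq0 aA (sub0set A).
split=> [[o_facet on_face] | [c [c_gt0 [x [oE ->]]]]].
  exact: facet_at_empty_unitvec.
by rewrite mulr0; apply: unitvec_facet_at_empty c_gt0 oE.
Qed.
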